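(* Let $\Lambda$ be a unital commutative ring, $q$ a non-negative integer, $\mathfrak g$ a Lie algebra over $\Lambda$ and $\mathfrak h$ an ideal of $\mathfrak g$. Then the canonical sequence of Lie algebras $\mathfrak h\wedge^q\mathfrak g\longrightarrow\mathfrak g\wedge^q\mathfrak g\longrightarrow(\mathfrak g/\mathfrak h)\wedge^q(\mathfrak g/\mathfrak h)\longrightarrow0$ is exact.
   Context: All Lie algebras are over $\Lambda$. For an ideal $\mathfrak h$ of $\mathfrak g$ and $q\ge1$, $\mathfrak h\otimes^q\mathfrak g$ is the Lie algebra generated by symbols $h\otimes g$, $\{h\}$ ($h\in\mathfrak h,g\in\mathfrak g$) subject to, for all $h,h'\in\mathfrak h$, $g,g'\in\mathfrak g$, $\lambda,\lambda'\in\Lambda$: (1) $\lambda(h\otimes g)=\lambda h\otimes g=h\otimes\lambda g$; (2) $(h+h')\otimes g=h\otimes g+h'\otimes g$; (3) $h\otimes(g+g')=h\otimes g+h\otimes g'$; (4) $[h,h']\otimes g=h\otimes[h',g]-h'\otimes[h,g]$; (5) $h\otimes[g,g']=[g',h]\otimes g-[g,h]\otimes g'$; (6) $[h\otimes g,h'\otimes g']=[h,g]\otimes[h',g']$; (7) $[\{h'\},h\otimes g]=[qh',h]\otimes g+h\otimes[qh',g]$; (8) $\{\lambda h+\lambda'h'\}=\lambda\{h\}+\lambda'\{h'\}$; (9) $[\{h\},\{h'\}]=qh\otimes qh'$; (10) $\{[h,g]\}=q(h\otimes g)$. For $q=0$, it is generated by the $h\otimes g$ subject to (1)–(6) only. The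 $q$-exterior product $\mathfrak h\wedge^q\mathfrak g$ is the quotient by the relations $h\otimes h=0$, $h\in\mathfrak h$, with images $h\wedge g,\{h\}$. The canonical maps are $h\wedge g\mapsto h\wedge g$, $\{h\}\mapsto\{h\}$ and $g\wedge g'\mapsto (g+\mathfrak h)\wedge(g'+\mathfrak h)$, $\{g\}\mapsto\{g+\mathfrak h\}$. *)

(* Lie algebras over a unital commutative ring Lambda,
   q-tensor/exterior products defined by their presentation
   (generators & relations), encoded via the universal property of the
   presented Lie algebra. *)
From HB Require Import structures.
From mathcomp Require Import all_boot all_order all_algebra.
Set Implicit Arguments. Unset Strict Implicit. Unset Printing Implicit Defensive.
Import GRing.Theory.
Local Open Scope ring_scope.

Section Lie.
Variable Lam : comPzRingType.

Definition lie_axioms (V : lmodType Lam) (br : V -> V -> V) : Prop :=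
  [/\ forall (a : Lam) x y z, br (a *: x + y) z = a *: br x z + br y z,
      forall (a : Lam) x y z, br x (a *: y + z) = a *: br x y + br x z,
      forall x, br x x = 0 &
      forall x y z, br x (br y z) + br y (br z x) + br z (br x y) = 0].

Definition lie_ideal (V : lmodType Lam) (br : V -> V -> V) (I : V -> Prop) : Prop :=
  [/\ I 0,
      forall (a : Lam) x y, I x -> I y -> I (a *: x + y) &
      forall x y, I x -> I (br x y) /\ I (br y x)].

Definition lie_hom (V W : lmodType Lam) (brV : V -> V -> V) (brW : W -> W -> W)
  (f : V -> W) : Prop :=
  (forall (a : Lam) x y, f (a *: x + y) = a *: f x + f y) /\
  (forall x y, f (brV x y) = brW (f x) (f y)).

Definition is_lie_quotient (L : lmodType Lam) (brL : L -> L -> L) (M : L -> Prop)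
  (Q : lmodType Lam) (brQ : Q -> Q -> Q) (p : L -> Q) : Prop :=
  [/\ lie_axioms brQ, lie_hom brL brQ p,
      (forall y, exists x, p x = y) &
      (forall x, p x = 0 <-> M x)].

(* Relations (1)-(10) of the q-tensor product M (x)^q L, plus the exterior
   relation h (x) h = 0, for an assignment of generators
   w h g  (the image of h (x) g, h in M, g in L) and
   c h    (the image of {h}, h in M).
   For q = 0 there are no generators {h}: this is encoded by requiring c = 0
   on M (and relations (7)-(10) are imposed only for q >= 1). *)
Record qext_rels (q : nat) (L : lmodType Lam) (brL : L -> L -> L) (M : L -> Prop)
  (E : lmodType Lam) (brE : E -> E -> E) (w : L -> L -> E) (c : L -> E) : Prop := {
  rel1 : forall (a : Lam) h g, M h -> a *: w h g = w (a *: h) g /\ w (a *: h) g = w h (a *: g);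
  rel2 : forall h h' g, M h -> M h' -> w (h + h') g = w h g + w h' g;
  rel3 : forall h g g', M h -> w h (g + g') = w h g + w h g';
  rel4 : forall h h' g, M h -> M h' ->
           w (brL h h') g = w h (brL h' g) - w h' (brL h g);
  rel5 : forall h g g', M h -> w h (brL g g') = w (brL g' h) g - w (brL g h) g';
  rel6 : forall h h' g g', M h -> M h' ->
           brE (w h g) (w h' g') = w (brL h g) (brL h' g');
  rel7 : (0 < q)%N -> forall h h' g, M h -> M h' ->
           brE (c h') (w h g) = w (brL (h' *+ q) h) g + w h (brL (h' *+ q) g);
  rel8 : (0 < q)%N -> forall (a a' : Lam) h h', M h -> M h' ->
           c (a *: h + a' *: h') = a *: c h + a' *: c h';
  rel9 : (0 < q)%N -> forall h h', M h -> M h' -> brE (c h) (c h') = w (h *+ q) (h' *+ q);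
  rel10 : (0 < q)%N -> forall h g, M h -> c (brL h g) = (w h g) *+ q;
  rel_q0 : q = 0%N -> forall h, M h -> c h = 0;
  rel_ext : forall h, M h -> w h h = 0 }.

Definition is_qext (q : nat) (L : lmodType Lam) (brL : L -> L -> L) (M : L -> Prop)
  (E : lmodType Lam) (brE : E -> E -> E) (w : L -> L -> E) (c : L -> E) : Prop :=
  [/\ lie_axioms brE,
      qext_rels q brL M brE w c &
      forall (T : lmodType Lam) (brT : T -> T -> T) (w' : L -> L -> T) (c' : L -> T),
        lie_axioms brT -> qext_rels q brL M brT w' c' ->
        (exists f : E -> T, [/\ lie_hom brE brT f,
            (forall h g, M h -> f (w h g) = w' h g) &
            (forall h, M h -> f (c h) = c' h)]) /\
        (forall f1 f2 : E -> T,
            lie_hom brE brT f1 -> (forall h g, M h -> f1 (w h g) = w' h g) ->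
            (forall h, M h -> f1 (c h) = c' h) ->
            lie_hom brE brT f2 -> (forall h g, M h -> f2 (w h g) = w' h g) ->
            (forall h, M h -> f2 (c h) = c' h) ->
            forall x, f1 x = f2 x)].

End Lie.

From HB Require Import structures.
From mathcomp Require Import all_boot all_order all_algebra.
From mathcomp Require Import boolp.
Import GRing.Theory.
Local Open Scope ring_scope.
Set Implicit Arguments. Unset Strict Implicit. Unset Printing Implicit Defensive.

(* Since p kills H, the composite f2 \o f1 kills the generators h /\ g and {h} (h in H),
   and f2 is onto because its image contains every generator of (G/H) /\^q (G/H).
   For exactness in the middle, relations (6), (7) and (9) show that brackets of
   generators with the generators h /\ g, {h} of Im f1 lie again in Im f1, so Im f1
   is an ideal and we may form pi : G /\^q G -> (G /\^q G) / Im f1.  As pi kills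
   h /\ g, g /\ h and {h} for h in H, the elements pi (g /\ g') and pi {g} only depend
   on the classes of g, g' modulo H; they satisfy the defining relations of
   (G/H) /\^q (G/H), so pi factors through f2 and ker f2 is contained in
   ker pi = Im f1. *)

Section LinearMaps.
Variables (Lam : comPzRingType) (U V : lmodType Lam) (f : U -> V).
Hypothesis f_lin : linear f.
HB.instance Definition _ := GRing.isLinear.Build Lam U V *:%R f f_lin.

Lemma lin0 : f 0 = 0. Proof. exact: linear0. Qed.
Lemma linD : {morph f : x y / x + y}. Proof. exact: linearD. Qed.
Lemma linN : {morph f : x / - x}. Proof. exact: linearN. Qed.
Lemma linB : {morph f : x y / x - y}. Proof. exact: linearB. Qed.
Lemma linZ a : {morph f : x / a *: x}. Proof. exact: linearZ. Qed.
Lemma linMn n : {morph f : x / x *+ n}. Proof. exact: linearMn. Qed.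
End LinearMaps.

Section LieAlgebra.
Variables (Lam : comPzRingType) (V : lmodType Lam) (br : V -> V -> V).
Hypothesis lieV : lie_axioms br.

Lemma lie_linearl z : linear (br^~ z).
Proof. by case: lieV => brl _ _ _ a x y; apply: brl. Qed.

Lemma lie_linearr x : linear (br x).
Proof. by case: lieV => _ brr _ _ a y z; apply: brr. Qed.

Lemma lie_alt x : br x x = 0. Proof. by case: lieV. Qed.

Lemma lie_anti x y : br y x = - br x y.
Proof.
apply/eqP; rewrite -addr_eq0 addrC -(lie_alt (x + y)).
by rewrite (linD (lie_linearl _)) !(linD (lie_linearr _)) !lie_alt add0r addr0.
Qed.

Lemma lie_jacobil x y z : br (br x y) z = br x (br y z) - br y (br x z).
Proof.
have jac : br x (br y z) + br y (br z x) = - br z (br x y).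
  by apply/eqP; rewrite -addr_eq0; apply/eqP; case: lieV.
by rewrite [br (br x y) z]lie_anti -jac [br x z]lie_anti (linN (lie_linearr _)) opprK.
Qed.

Lemma lie_derivation x y z : br x (br y z) = br (br x y) z + br y (br x z).
Proof. by rewrite lie_jacobil subrK. Qed.
End LieAlgebra.

Definition is_submodule (Lam : comPzRingType) (V : lmodType Lam) (S : V -> Prop) :=
  S 0 /\ forall a x y, S x -> S y -> S (a *: x + y).

Section Submodule.
Variables (Lam : comPzRingType) (V : lmodType Lam) (S : V -> Prop).
Hypothesis S_submod : is_submodule S.

Lemma submod0 : S 0. Proof. by case: S_submod. Qed.
Lemma submodP a x y : S x -> S y -> S (a *: x + y).
Proof. by case: S_submod => _; apply. Qed.
Lemma submodD x y : S x -> S y -> S (x + y).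
Proof. by move=> Sx Sy; have := submodP 1 Sx Sy; rewrite scale1r. Qed.
Lemma submodZ a x : S x -> S (a *: x).
Proof. by move=> Sx; have := submodP a Sx submod0; rewrite addr0. Qed.
Lemma submodN x : S x -> S (- x).
Proof. by rewrite -scaleN1r; apply: submodZ. Qed.
Lemma submodB x y : S x -> S y -> S (x - y).
Proof. by move=> Sx Sy; apply: submodD => //; apply: submodN. Qed.
Lemma submodMn x n : S x -> S (x *+ n).
Proof.
move=> Sx; elim: n => [|n IH]; first by rewrite mulr0n; apply: submod0.
by rewrite mulrS; apply: submodD.
Qed.
End Submodule.

Lemma image_submod (Lam : comPzRingType) (U V : lmodType Lam) (f : U -> V) :
  linear f -> is_submodule (fun y => exists x, f x = y).
Proof.
move=> f_lin; split; first by exists 0; rewrite (lin0 f_lin).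
by move=> a _ _ [x <-] [y <-]; exists (a *: x + y); rewrite f_lin.
Qed.

Section LieIdeal.
Variables (Lam : comPzRingType) (V : lmodType Lam) (br : V -> V -> V) (I : V -> Prop).
Hypothesis I_ideal : lie_ideal br I.

Lemma lie_ideal_submod : is_submodule I.
Proof. by case: I_ideal. Qed.
Lemma lie_idealMl x y : I x -> I (br x y).
Proof. by case: I_ideal => _ _ brI /(brI _ y) []. Qed.
Lemma lie_idealMr x y : I y -> I (br x y).
Proof. by case: I_ideal => _ _ brI /(brI _ x) []. Qed.
End LieIdeal.

Lemma lie_idealT (Lam : comPzRingType) (V : lmodType Lam) (br : V -> V -> V) :
  lie_ideal br (fun _ => True).
Proof. by []. Qed.

Ltac lie_ideal_closed I_ideal :=
  let I_submod := constr:(lie_ideal_submod I_ideal) in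
  solve [ assumption
    | apply: (submodD I_submod); lie_ideal_closed I_ideal
    | apply: (submodZ I_submod); lie_ideal_closed I_ideal
    | apply: (submodB I_submod); lie_ideal_closed I_ideal
    | apply: (submodMn I_submod); lie_ideal_closed I_ideal
    | apply: (lie_idealMl I_ideal); lie_ideal_closed I_ideal
    | apply: (lie_idealMr I_ideal); lie_ideal_closed I_ideal ].

Section LieHom.
Variable Lam : comPzRingType.
Implicit Types U V W : lmodType Lam.

Lemma lie_hom_linear U V (brU : U -> U -> U) (brV : V -> V -> V) f :
  lie_hom brU brV f -> linear f.
Proof. by case. Qed.

Lemma lie_hom_id V (br : V -> V -> V) : lie_hom br br id.
Proof. by []. Qed.

Lemma lie_hom_comp U V W (brU : U -> U -> U) (brV : V -> V -> V) (brW : W -> W -> W) f g :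
  lie_hom brU brV f -> lie_hom brV brW g -> lie_hom brU brW (g \o f).
Proof. by case=> fl fb [gl gb]; split=> *; rewrite /= ?fl ?gl ?fb ?gb. Qed.

Lemma lie_hom0 U V (brU : U -> U -> U) (brV : V -> V -> V) :
  lie_axioms brV -> lie_hom brU brV (fun _ => 0).
Proof. by move=> lieV; split=> *; rewrite ?scaler0 ?addr0 ?lie_alt. Qed.
End LieHom.

Section LieQuotientMap.
Variables (Lam : comPzRingType) (L Q : lmodType Lam) (brL : L -> L -> L) (brQ : Q -> Q -> Q).
Variables (M : L -> Prop) (p : L -> Q).
Hypothesis p_quot : is_lie_quotient brL M brQ p.

Lemma lie_quotient_hom : lie_hom brL brQ p. Proof. by case: p_quot. Qed.
Lemma lie_quotient_surj y : exists x, p x = y. Proof. by case: p_quot. Qed.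
Lemma lie_quotient_ker x : p x = 0 <-> M x. Proof. by case: p_quot. Qed.
End LieQuotientMap.

Section RelationsTransport.
Variables (Lam : comPzRingType) (q : nat) (L : lmodType Lam) (brL : L -> L -> L).
Variables (M : L -> Prop) (E T : lmodType Lam) (brE : E -> E -> E) (brT : T -> T -> T).

Lemma qext_rels_hom (w : L -> L -> E) (c : L -> E) (phi : E -> T) :
  lie_hom brE brT phi -> qext_rels q brL M brE w c ->
  qext_rels q brL M brT (fun h g => phi (w h g)) (fun h => phi (c h)).
Proof.
move=> [phil phib] [r1 r2 r3 r4 r5 r6 r7 r8 r9 r10 r0 re]; split.
- by move=> a h g Mh; case: (r1 a h g Mh) => <- <-; rewrite (linZ phil).
- by move=> h h' g Mh Mh'; rewrite r2 // (linD phil).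
- by move=> h g g' Mh; rewrite r3 // (linD phil).
- by move=> h h' g Mh Mh'; rewrite r4 // (linB phil).
- by move=> h g g' Mh; rewrite r5 // (linB phil).
- by move=> h h' g g' Mh Mh'; rewrite -phib r6.
- by move=> qp h h' g Mh Mh'; rewrite -phib r7 // (linD phil).
- by move=> qp a a' h h' Mh Mh'; rewrite r8 // (linD phil) !(linZ phil).
- by move=> qp h h' Mh Mh'; rewrite -phib r9.
- by move=> qp h g Mh; rewrite r10 // (linMn phil).
- by move=> q0 h Mh; rewrite r0 // (lin0 phil).
- by move=> h Mh; rewrite re // (lin0 phil).
Qed.

Lemma qext_rels_inj (w : L -> L -> E) (c : L -> E) (w' : L -> L -> T) (c' : L -> T)
    (iota : T -> E) :
  lie_ideal brL M -> injective iota -> lie_hom brT brE iota ->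
  (forall h g, M h -> iota (w' h g) = w h g) -> (forall h, M h -> iota (c' h) = c h) ->
  qext_rels q brL M brE w c -> qext_rels q brL M brT w' c'.
Proof.
move=> M_ideal iota_inj [iotal iotab] iota_w iota_c R.
split=> [a h g Mh|*|*|*|*|*|*|*|*|*|*|*].
  have [e1 e2] := rel1 R a g Mh.
  by split; apply: iota_inj; rewrite ?(linZ iotal) !iota_w; try lie_ideal_closed M_ideal.
all: apply: iota_inj.
all: rewrite ?iotab ?(linD iotal) ?(linN iotal) ?(linMn iotal) ?(linZ iotal) ?(lin0 iotal).
all: rewrite ?iota_w ?iota_c; try lie_ideal_closed M_ideal.
all: by case: R => *; eauto.
Qed.
End RelationsTransport.

Lemma qext_rels_descend (Lam : comPzRingType) (q : nat) (L Q T : lmodType Lam)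
    (brL : L -> L -> L) (brQ : Q -> Q -> Q) (brT : T -> T -> T) (p : L -> Q)
    (w : L -> L -> T) (c : L -> T) (w' : Q -> Q -> T) (c' : Q -> T) :
  lie_hom brL brQ p -> (forall y, exists x, p x = y) ->
  (forall g g', w' (p g) (p g') = w g g') -> (forall g, c' (p g) = c g) ->
  qext_rels q brL (fun _ => True) brT w c -> qext_rels q brQ (fun _ => True) brT w' c'.
Proof.
move=> [pl pb] p_surj w'E c'E R.
(* Write every element of Q introduced by [split] as an image [p g]. *)
split=> *; repeat match goal with x : ?X |- _ => unify X (Q : Type); have [? <-] := p_surj x end.
all: rewrite -?(linZ pl) -?(linMn pl) -?pb -?(linD pl) ?w'E ?c'E.
all: by case: R => *; eauto.
Qed.

Section PresentedLieAlgebra.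
Variables (Lam : comPzRingType) (q : nat) (L E : lmodType Lam) (brL : L -> L -> L).
Variables (M : L -> Prop) (brE : E -> E -> E) (w : L -> L -> E) (c : L -> E).
Hypothesis E_qext : is_qext q brL M brE w c.

Lemma qext_lie : lie_axioms brE. Proof. by case: E_qext. Qed.
Lemma qext_relations : qext_rels q brL M brE w c. Proof. by case: E_qext. Qed.

Lemma qext_hom_eq (T : lmodType Lam) (brT : T -> T -> T) (f g : E -> T) :
  lie_axioms brT -> lie_hom brE brT f -> lie_hom brE brT g ->
  (forall h k, M h -> f (w h k) = g (w h k)) -> (forall h, M h -> f (c h) = g (c h)) ->
  f =1 g.
Proof.
move=> lieT f_hom g_hom fg_w fg_c; case: E_qext => _ R univ.
have [_ uniq] := univ T brT _ _ lieT (qext_rels_hom f_hom R).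
by apply: uniq => // *; rewrite ?fg_w ?fg_c.
Qed.

Section Induction.
Hypothesis M_ideal : lie_ideal brL M.
Variable S : E -> Prop.
Hypotheses (S_submod : is_submodule S) (S_br : forall x y, S x -> S y -> S (brE x y)).
Hypotheses (S_w : forall h g, M h -> S (w h g)) (S_c : forall h, M h -> S (c h)).

Definition subalg_pred : {pred E} := fun x => `[< S x >].

Lemma subalg_submod_closed : GRing.submod_closed subalg_pred.
Proof.
split=> [|a x y /asboolP Sx /asboolP Sy]; apply/asboolP; first exact: submod0.
exact: submodP.
Qed.

HB.instance Definition _ :=
  GRing.isSubmodClosed.Build Lam E subalg_pred subalg_submod_closed.

Record subalg := Subalg { subalg_val :> E; _ : subalg_val \in subalg_pred }.
HB.instance Definition _ := [isSub for subalg_val].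
HB.instance Definition _ := [Choice of subalg by <:].
HB.instance Definition _ := [SubChoice_isSubLmodule of subalg by <:].

Definition subalg_br (x y : subalg) : subalg :=
  Subalg (asboolT (S_br (asboolW (valP x)) (asboolW (valP y)))).

Lemma subalg_lie : lie_axioms subalg_br.
Proof.
case: qext_lie => brl brr alt jac.
by split=> *; apply: val_inj; rewrite /= ?brl ?brr ?alt ?jac.
Qed.

Lemma val_subalg_hom : lie_hom subalg_br brE val.
Proof. by []. Qed.

Lemma val_insubd_subalg x : S x -> val (insubd (0 : subalg) x) = x.
Proof. by move=> Sx; rewrite insubdK //; apply/asboolP. Qed.

Lemma qext_ind x : S x.
Proof.
pose w' h g := insubd (0 : subalg) (w h g); pose c' h := insubd (0 : subalg) (c h).
have R' : qext_rels q brL M subalg_br w' c'.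
  apply: (qext_rels_inj M_ideal val_inj val_subalg_hom _ _ qext_relations).
    by move=> h g Mh; apply/val_insubd_subalg/S_w.
  by move=> h Mh; apply/val_insubd_subalg/S_c.
have [_ _ univ] := E_qext.
have [[f [f_hom f_w f_c]] _] := univ _ _ _ _ subalg_lie R'.
have val_f : val \o f =1 id.
  apply: (qext_hom_eq qext_lie (lie_hom_comp f_hom val_subalg_hom) (lie_hom_id _)).
    by move=> h g Mh; rewrite /= f_w // val_insubd_subalg //; apply: S_w.
  by move=> h Mh; rewrite /= f_c // val_insubd_subalg //; apply: S_c.
by rewrite -[x]val_f; apply/asboolP; exact: (valP (f x)).
Qed.
End Induction.
End PresentedLieAlgebra.

Section LieQuotient.
Variables (Lam : comPzRingType) (V : lmodType Lam) (br : V -> V -> V) (I : V -> Prop).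
Hypotheses (lieV : lie_axioms br) (I_ideal : lie_ideal br I).
Let I_submod := lie_ideal_submod I_ideal.

Definition coset (v : V) : V -> Prop := fun x => I (x - v).
Definition quot := {P : V -> Prop | exists v, P = coset v}.
HB.instance Definition _ := gen_eqMixin quot.
HB.instance Definition _ := gen_choiceMixin quot.

Definition qpi (v : V) : quot := exist _ (coset v) (ex_intro _ v erefl).
Definition qrepr (P : quot) : V := proj1_sig (cid (proj2_sig P)).

Lemma qreprK P : qpi (qrepr P) = P.
Proof.
case: P => P P_coset; apply: eq_exist; rewrite /qrepr /=.
by case: (cid P_coset).
Qed.

Lemma qpi_surj P : exists v, qpi v = P.
Proof. by exists (qrepr P); apply: qreprK. Qed.

Lemma qpi_eq u v : qpi u = qpi v <-> I (u - v).
Proof.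
split=> [/(congr1 sval) /= eq_coset | Iuv].
  have : coset u u by rewrite /coset subrr; apply: submod0 I_submod.
  by rewrite eq_coset.
apply: eq_exist; apply: funext => x; apply: propext; rewrite /coset.
split=> Ix.
  have -> : x - v = (x - u) + (u - v) by rewrite addrA subrK.
  exact: submodD.
have -> : x - u = (x - v) - (u - v) by rewrite opprB addrA subrK.
exact: submodB.
Qed.

Lemma qreprP v : I (qrepr (qpi v) - v).
Proof. by apply/qpi_eq; rewrite qreprK. Qed.

Definition qadd P P' := qpi (qrepr P + qrepr P').
Definition qopp P := qpi (- qrepr P).
Definition qscale a P := qpi (a *: qrepr P).
Definition qbr P P' := qpi (br (qrepr P) (qrepr P')).

Lemma qaddE u v : qadd (qpi u) (qpi v) = qpi (u + v).
Proof.
apply/qpi_eq; rewrite opprD addrACA.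
by apply: (submodD I_submod); apply: qreprP.
Qed.

Lemma qoppE v : qopp (qpi v) = qpi (- v).
Proof. by apply/qpi_eq; rewrite opprK addrC -opprB; apply/(submodN I_submod)/qreprP. Qed.

Lemma qscaleE a v : qscale a (qpi v) = qpi (a *: v).
Proof. by apply/qpi_eq; rewrite -scalerBr; apply/(submodZ I_submod)/qreprP. Qed.

Lemma qbrE u v : qbr (qpi u) (qpi v) = qpi (br u v).
Proof.
apply/qpi_eq.
have -> : br (qrepr (qpi u)) (qrepr (qpi v)) - br u v =
    br (qrepr (qpi u) - u) (qrepr (qpi v)) + br u (qrepr (qpi v) - v).
  by rewrite (linB (lie_linearl lieV _)) (linB (lie_linearr lieV _)) addrA subrK.
apply: (submodD I_submod); first exact/(lie_idealMl I_ideal)/qreprP.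
exact/(lie_idealMr I_ideal)/qreprP.
Qed.

Lemma qaddA : associative qadd.
Proof.
move=> P1 P2 P3; case: (qpi_surj P1) (qpi_surj P2) (qpi_surj P3) => [u <-] [v <-] [x <-].
by rewrite !qaddE addrA.
Qed.

Lemma qaddC : commutative qadd.
Proof.
by move=> P1 P2; case: (qpi_surj P1) (qpi_surj P2) => [u <-] [v <-]; rewrite !qaddE addrC.
Qed.

Lemma qadd0 : left_id (qpi 0) qadd.
Proof. by move=> P; case: (qpi_surj P) => [v <-]; rewrite qaddE add0r. Qed.

Lemma qaddN : left_inverse (qpi 0) qopp qadd.
Proof. by move=> P; case: (qpi_surj P) => [v <-]; rewrite qoppE qaddE addNr. Qed.

HB.instance Definition _ := GRing.isZmodule.Build quot qaddA qaddC qadd0 qaddN.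

Lemma qscaleA a b P : qscale a (qscale b P) = qscale (a * b) P.
Proof. by case: (qpi_surj P) => [v <-]; rewrite !qscaleE scalerA. Qed.

Lemma qscale1 : left_id 1 qscale.
Proof. by move=> P; case: (qpi_surj P) => [v <-]; rewrite qscaleE scale1r. Qed.

Lemma qscaleDr : right_distributive qscale qadd.
Proof.
move=> a P1 P2; case: (qpi_surj P1) (qpi_surj P2) => [u <-] [v <-].
by rewrite qaddE !qscaleE qaddE scalerDr.
Qed.

Lemma qscaleDl P : {morph qscale^~ P : a b / a + b >-> qadd a b}.
Proof. by move=> a b; case: (qpi_surj P) => [v <-]; rewrite !qscaleE qaddE scalerDl. Qed.

HB.instance Definition _ :=
  GRing.Zmodule_isLmodule.Build Lam quot qscaleA qscale1 qscaleDr qscaleDl.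

Lemma qpi_linear : linear qpi.
Proof. by move=> a u v; rewrite -qaddE -qscaleE. Qed.

Lemma qbr_lie : lie_axioms qbr.
Proof.
have qpi_lin := qpi_linear.
case: lieV => brl brr alt jac; split.
- move=> a P1 P2 P3; case: (qpi_surj P1) (qpi_surj P2) (qpi_surj P3) => [u <-] [v <-] [x <-].
  by rewrite -qpi_lin !qbrE brl qpi_lin.
- move=> a P1 P2 P3; case: (qpi_surj P1) (qpi_surj P2) (qpi_surj P3) => [u <-] [v <-] [x <-].
  by rewrite -qpi_lin !qbrE brr qpi_lin.
- by move=> P; case: (qpi_surj P) => [v <-]; rewrite qbrE alt.
- move=> P1 P2 P3; case: (qpi_surj P1) (qpi_surj P2) (qpi_surj P3) => [u <-] [v <-] [x <-].
  by rewrite !qbrE -!(linD qpi_lin) jac.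
Qed.

Lemma lie_quotient_exists :
  exists (W : lmodType Lam) (brW : W -> W -> W) (pi : V -> W), is_lie_quotient br I brW pi.
Proof.
exists quot, qbr, qpi; split; [exact: qbr_lie | | exact: qpi_surj |].
  by split=> [|u v]; [exact: qpi_linear | rewrite qbrE].
by move=> v; rewrite -[0]/(qpi 0) qpi_eq subr0.
Qed.
End LieQuotient.

Section FullExteriorRelations.
Variables (Lam : comPzRingType) (q : nat) (L E : lmodType Lam) (brL : L -> L -> L).
Variables (brE : E -> E -> E) (w : L -> L -> E) (c : L -> E).
Hypothesis R : qext_rels q brL (fun _ => True) brE w c.

Lemma qext_linearl g : linear (w^~ g).
Proof. by move=> a x y; rewrite (rel2 R) // (proj1 (rel1 R a g I)). Qed.

Lemma qext_linearr h : linear (w h).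
Proof. by move=> a x y; rewrite (rel3 R) // (proj1 (rel1 R a x I)) (proj2 (rel1 R a x I)). Qed.

Lemma qext_anti h g : w g h = - w h g.
Proof.
apply/eqP; rewrite -addr_eq0 addrC -(rel_ext R (h := h + g) I).
by rewrite (linD (qext_linearl _)) !(linD (qext_linearr _)) !(rel_ext R) // add0r addr0.
Qed.

Lemma qext_c_linear : linear c.
Proof.
move=> a x y; have [q0|q_gt0] := posnP q; first by rewrite !(rel_q0 R q0) // scaler0 addr0.
by have := rel8 R q_gt0 a 1 (h := x) (h' := y) I I; rewrite !scale1r.
Qed.
End FullExteriorRelations.

Section Exactness.
Variables (Lam : comPzRingType) (q : nat) (G Q E1 E2 E3 : lmodType Lam).
Variables (brG : G -> G -> G) (brQ : Q -> Q -> Q) (H : G -> Prop) (p : G -> Q).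
Variables (brE1 : E1 -> E1 -> E1) (w1 : G -> G -> E1) (c1 : G -> E1).
Variables (brE2 : E2 -> E2 -> E2) (w2 : G -> G -> E2) (c2 : G -> E2).
Variables (brE3 : E3 -> E3 -> E3) (w3 : Q -> Q -> E3) (c3 : Q -> E3).
Variables (f1 : E1 -> E2) (f2 : E2 -> E3).
Hypotheses (H_ideal : lie_ideal brG H) (p_quot : is_lie_quotient brG H brQ p).
Hypothesis E1_qext : is_qext q brG H brE1 w1 c1.
Hypothesis E2_qext : is_qext q brG (fun _ => True) brE2 w2 c2.
Hypothesis E3_qext : is_qext q brQ (fun _ => True) brE3 w3 c3.
Hypothesis f1_hom : lie_hom brE1 brE2 f1.
Hypotheses (f1_w : forall h g, H h -> f1 (w1 h g) = w2 h g)
           (f1_c : forall h, H h -> f1 (c1 h) = c2 h).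
Hypothesis f2_hom : lie_hom brE2 brE3 f2.
Hypotheses (f2_w : forall g g', f2 (w2 g g') = w3 (p g) (p g'))
           (f2_c : forall g, f2 (c2 g) = c3 (p g)).

Let lieE2 := qext_lie E2_qext.
Let lieE3 := qext_lie E3_qext.
Let R2 := qext_relations E2_qext.
Let R3 := qext_relations E3_qext.
Let H_submod := lie_ideal_submod H_ideal.
Let f1_lin := lie_hom_linear f1_hom.
Let f2_lin := lie_hom_linear f2_hom.

Let p_hom := lie_quotient_hom p_quot.
Let p_surj := lie_quotient_surj p_quot.
Let p_ker := lie_quotient_ker p_quot.

Lemma f2_f1_eq0 x : f2 (f1 x) = 0.
Proof.
have p_H h : H h -> p h = 0 by move/p_ker.
apply: (qext_hom_eq E1_qext lieE3 (lie_hom_comp f1_hom f2_hom) (lie_hom0 _ lieE3))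
  => [h g Hh | h Hh] /=.
  by rewrite f1_w // f2_w p_H // (lin0 (qext_linearl R3 _)).
by rewrite f1_c // f2_c p_H // (lin0 (qext_c_linear R3)).
Qed.

Lemma f2_surj z : exists y, f2 y = z.
Proof.
move: z; apply: (qext_ind E3_qext (lie_idealT _)).
- exact: image_submod f2_lin.
- by move=> _ _ [y <-] [y' <-]; exists (brE2 y y'); rewrite (proj2 f2_hom).
- move=> x x' _; have [[g <-] [g' <-]] := (p_surj x, p_surj x').
  by exists (w2 g g'); rewrite f2_w.
- by move=> x _; have [g <-] := p_surj x; exists (c2 g); rewrite f2_c.
Qed.

Let im_f1 y := exists x, f1 x = y.
Let im_submod : is_submodule im_f1 := image_submod f1_lin.

Lemma im_f1_w h g : H h -> im_f1 (w2 h g).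
Proof. by move=> Hh; exists (w1 h g); rewrite f1_w. Qed.

Lemma im_f1_w_swap h g : H h -> im_f1 (w2 g h).
Proof. by move=> Hh; rewrite (qext_anti R2); apply/(submodN im_submod)/im_f1_w. Qed.

Lemma im_f1_c h : H h -> im_f1 (c2 h).
Proof. by move=> Hh; exists (c1 h); rewrite f1_c. Qed.

Lemma im_f1_normalized y :
  (forall h g, H h -> im_f1 (brE2 y (w2 h g))) -> (forall h, H h -> im_f1 (brE2 y (c2 h))) ->
  forall x, im_f1 (brE2 y (f1 x)).
Proof.
move=> y_w y_c; apply: (qext_ind E1_qext H_ideal).
- split=> [|a x x' yx yx']; last by rewrite f1_lin (lie_linearr lieE2); apply: submodP.
  by rewrite (lin0 f1_lin) (lin0 (lie_linearr lieE2 _)); apply: submod0 im_submod.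
- move=> x x' [z e] [z' e']; rewrite (proj2 f1_hom) (lie_derivation lieE2) -e -e'.
  by exists (brE1 z x' + brE1 x z'); rewrite (linD f1_lin) !(proj2 f1_hom).
- by move=> h g Hh; rewrite f1_w //; apply: y_w.
- by move=> h Hh; rewrite f1_c //; apply: y_c.
Qed.

Lemma im_f1_ideal : lie_ideal brE2 im_f1.
Proof.
have normalized : forall y x, im_f1 (brE2 y (f1 x)).
  apply: (qext_ind E2_qext (lie_idealT _)).
  - split=> [x|a y y' yx y'x x]; last by rewrite (lie_linearl lieE2); apply: submodP.
    by rewrite (lin0 (lie_linearl lieE2 _)); apply: submod0 im_submod.
  - move=> y y' yx y'x x; rewrite (lie_jacobil lieE2).
    have [[z <-] [z' <-]] := (y'x x, yx x).
    by apply: (submodB im_submod); [apply: yx | apply: y'x].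
  - move=> g g' _; apply: im_f1_normalized => [h k Hh|h Hh].
      by rewrite (rel6 R2) //; apply/im_f1_w_swap/(lie_idealMl H_ideal).
    have [q0|q_gt0] := posnP q.
      by rewrite (rel_q0 R2 q0) // (lin0 (lie_linearr lieE2 _)); apply: submod0 im_submod.
    rewrite (lie_anti lieE2) (rel7 R2 q_gt0) //; apply/(submodN im_submod)/(submodD im_submod).
      exact/im_f1_w/(lie_idealMl H_ideal)/(submodMn H_submod).
    exact/im_f1_w_swap/(lie_idealMl H_ideal)/(submodMn H_submod).
  - move=> g _ x; have [q0|q_gt0] := posnP q.
      by rewrite (rel_q0 R2 q0) // (lin0 (lie_linearl lieE2 _)); apply: submod0 im_submod.
    move: x; apply: im_f1_normalized => [h k Hh|h Hh]; last first.
      by rewrite (rel9 R2 q_gt0) //; apply/im_f1_w_swap/(submodMn H_submod).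
    rewrite (rel7 R2 q_gt0) //; apply: (submodD im_submod); apply: im_f1_w => //.
    exact: (lie_idealMr H_ideal).
split; [exact: submod0 im_submod | exact: submodP im_submod |].
move=> _ y [x <-]; split; last exact: normalized.
by rewrite (lie_anti lieE2); apply/(submodN im_submod)/normalized.
Qed.

Lemma factor_through_f2 (W : lmodType Lam) (brW : W -> W -> W) (pi : E2 -> W) :
  lie_axioms brW -> lie_hom brE2 brW pi ->
  (forall h g, H h -> pi (w2 h g) = 0) -> (forall h, H h -> pi (c2 h) = 0) ->
  exists s, lie_hom brE3 brW s /\ forall y, s (f2 y) = pi y.
Proof.
move=> lieW pi_hom pi_w pi_c; have pi_lin := lie_hom_linear pi_hom.
have pi_w_swap h g : H h -> pi (w2 g h) = 0.
  by move=> Hh; rewrite (qext_anti R2) (linN pi_lin) pi_w // oppr0.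
pose sec y := sval (cid (p_surj y)).
have secK y : p (sec y) = y := svalP (cid (p_surj y)).
have H_sec g : H (sec (p g) - g).
  by apply/p_ker; rewrite (linB (lie_hom_linear p_hom)) secK subrr.
pose w' x y := pi (w2 (sec x) (sec y)); pose c' x := pi (c2 (sec x)).
have w'E g g' : w' (p g) (p g') = pi (w2 g g').
  apply/eqP; rewrite -subr_eq0 -(linB pi_lin).
  have -> : w2 (sec (p g)) (sec (p g')) - w2 g g' =
      w2 (sec (p g) - g) (sec (p g')) + w2 g (sec (p g') - g').
    by rewrite (linB (qext_linearl R2 _)) (linB (qext_linearr R2 _)) addrA subrK.
  by rewrite (linD pi_lin) pi_w // pi_w_swap // addr0.
have c'E g : c' (p g) = pi (c2 g).
  by apply/eqP; rewrite -subr_eq0 -!(linB pi_lin) -(linB (qext_c_linear R2)) pi_c.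
have R' := qext_rels_descend p_hom p_surj w'E c'E (qext_rels_hom pi_hom R2).
have [_ _ univ3] := E3_qext.
have [[s [s_hom s_w s_c]] _] := univ3 W brW w' c' lieW R'.
exists s; split=> //.
apply: (qext_hom_eq E2_qext lieW (lie_hom_comp f2_hom s_hom) pi_hom) => [g g' _|g _] /=.
  by rewrite f2_w s_w.
by rewrite f2_c s_c.
Qed.

Lemma ker_f2_sub_im y : f2 y = 0 -> exists x, f1 x = y.
Proof.
have [W [brW [pi [lieW pi_hom _ pi_ker]]]] := lie_quotient_exists lieE2 im_f1_ideal.
have pi_w h g : H h -> pi (w2 h g) = 0 by move=> Hh; apply/pi_ker/im_f1_w.
have pi_c h : H h -> pi (c2 h) = 0 by move=> Hh; apply/pi_ker/im_f1_c.
have [s [s_hom s_f2]] := factor_through_f2 lieW pi_hom pi_w pi_c.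
by move=> f2y0; apply/pi_ker; rewrite -s_f2 f2y0 (lin0 (lie_hom_linear s_hom)).
Qed.
End Exactness.

Unset Implicit Arguments.
Theorem proposition3p2 (Lam : comPzRingType) (q : nat)
  (G : lmodType Lam) (brG : G -> G -> G) (HG : lie_axioms brG)
  (H : G -> Prop) (HH : lie_ideal brG H)
  (Q : lmodType Lam) (brQ : Q -> Q -> Q) (p : G -> Q)
  (Hp : is_lie_quotient brG H brQ p)
  (E1 : lmodType Lam) (brE1 : E1 -> E1 -> E1) (w1 : G -> G -> E1) (c1 : G -> E1)
  (HE1 : is_qext q brG H brE1 w1 c1)
  (E2 : lmodType Lam) (brE2 : E2 -> E2 -> E2) (w2 : G -> G -> E2) (c2 : G -> E2)
  (HE2 : is_qext q brG (fun _ => True) brE2 w2 c2)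
  (E3 : lmodType Lam) (brE3 : E3 -> E3 -> E3) (w3 : Q -> Q -> E3) (c3 : Q -> E3)
  (HE3 : is_qext q brQ (fun _ => True) brE3 w3 c3)
  (f1 : E1 -> E2) (Hf1 : lie_hom brE1 brE2 f1)
  (Hf1w : forall h g, H h -> f1 (w1 h g) = w2 h g)
  (Hf1c : forall h, H h -> f1 (c1 h) = c2 h)
  (f2 : E2 -> E3) (Hf2 : lie_hom brE2 brE3 f2)
  (Hf2w : forall g g', f2 (w2 g g') = w3 (p g) (p g'))
  (Hf2c : forall g, f2 (c2 g) = c3 (p g)) :
  (forall y : E2, f2 y = 0 <-> exists x : E1, f1 x = y) /\
  (forall z : E3, exists y : E2, f2 y = z).
Proof.
split=> [y|]; last exact: (f2_surj Hp HE3 Hf2 Hf2w Hf2c).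
split=> [|[x <-]]; last exact: (f2_f1_eq0 Hp HE1 HE3 Hf1 Hf1w Hf1c Hf2 Hf2w Hf2c).
exact: (ker_f2_sub_im HH Hp HE1 HE2 HE3 Hf1 Hf1w Hf1c Hf2 Hf2w Hf2c).
Qed.
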